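(* For a directed graph $\vec G$ on $[n]$, let $\vec G_{\mathrm{fwd}}$ be the undirected graph whose edges are the forward edges of $\vec G$. Then: (i) $\mathcal{F}_{\vec G(n,p)}$ has the same distribution as $\mathcal{F}_{G(n,p)}$; (ii) $(\vec G(n,p))_{\mathrm{fwd}}$ has the same distribution as $G(n,p)$; (iii) one can couple $G(n,p)$ and $\vec G(n,p)$ as follows: first sample $G(n,p)$, which gives a depth-first ordering $(v_0,\dots,v_{n-1})$ of $[n]$; then let $\vec G_{\mathrm{fwd}}(n,p)=G(n,p)$ and add to it each of the possible back edges $(v_i,v_j)$, $j<i$, independently with probability $p$.
   Context: $[n]=\{1,\dots,n\}$. $\vec G(n,p)$: each of the $n(n-1)$ directed edges $(i,j)$, $i\ne j$, present independently with probability $p$. $G(n,p)$: each of the $\binom n2$ undirected edges present independently with probability $p$. Depth-first exploration. For a directed graph $\vec G$ (resp. undirected graph $G$) on $[n]$, define inductively for $i=0,\dots,n$ an ordered list $\mathcal O_i$ (open vertices) and a set $\mathcal A_i$ (explored vertices): $\mathcal O_0=(1)$, $\mathcal A_0=\emptyset$. Given $\mathcal O_i,\mathcal A_i$, let $v_i$ be the first element of $\mathcal O_i$, $\mathcal A_{i+1}=\mathcal A_i\cup\{v_i\}$, and $\mathcal N_i$ the set of out-neighbours (resp. neighbours) of $v_i$ not in $\mathcal O_i\cup\mathcal A_i$. $\mathcal O_{i+1}$ is obtained from $\mathcal O_i$ by removing $v_i$ and placing the elements of $\mathcal N_i$ in increasing order at the start (the smallest element of $\mathcal N_i$ becomes first);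 if this gives $\mathcal O_{i+1}=\emptyset$, instead let $\mathcal O_{i+1}$ consist of the smallest element of $[n]\setminus\mathcal A_{i+1}$. The forest $\mathcal F_{\vec G}$ (resp. $\mathcal F_G$) has an edge from $x$ to $y$ iff $x=v_i$ and $y\in\mathcal N_i$ for some $i$. The order $(v_0,\dots,v_{n-1})$ is the depth-first ordering. An edge $(v_i,v_j)$ of $\vec G$ is a forward edge if $i<j$ and a back edge if $j<i$. *)

(* Vertices [n] = {1..n} are encoded by 'I_n = {0..n-1}
   (vertex k+1 <-> ordinal k); the natural order is preserved. *)
From HB Require Import structures.
From mathcomp Require Import all_boot all_order all_algebra.
Set Implicit Arguments. Unset Strict Implicit. Unset Printing Implicit Defensive.
Import Order.TTheory GRing.Theory Num.Theory.
Local Open Scope ring_scope.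

Section Graphs.
Variable n : nat.
Notation V := ('I_n).

Definition offdiag : {set V * V} := [set e : V * V | e.1 != e.2].
(* An undirected graph on [n]: its edges {i,j} are encoded as pairs (i,j), i < j. *)
Definition upper : {set V * V} := [set e : V * V | (e.1 < e.2)%N].

Definition dadj (D : {set V * V}) (x y : V) : bool := (x, y) \in D.
Definition uadj (G : {set V * V}) (x y : V) : bool := ((x, y) \in G) || ((y, x) \in G).

(* state = (O_i, A_i); one step returns (v_i, N_i) and the next state. *)
Definition dfs_step (adj : V -> V -> bool) (st : seq V * {set V})
  : option (V * seq V) * (seq V * {set V}) :=
  match st.1 with
  | [::] => (None, st)
  | v :: O' =>
      let A' := v |: st.2 in
      let N := [seq y <- enum V | adj v y && (y \notin st.1) && (y \notin st.2)] in
      let O2 := N ++ O' in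
      let O3 := if O2 is [::] then take 1 [seq y <- enum V | y \notin A'] else O2 in
      (Some (v, N), (O3, A'))
  end.

Fixpoint dfs_iter (adj : V -> V -> bool) (k : nat) (st : seq V * {set V})
  : seq (V * seq V) :=
  match k with
  | 0 => [::]
  | k'.+1 =>
      match dfs_step adj st with
      | (Some r, st') => r :: dfs_iter adj k' st'
      | (None, _) => [::]
      end
  end.

Definition dfs_trace (adj : V -> V -> bool) : seq (V * seq V) :=
  dfs_iter adj n (take 1 (enum V), set0).

Definition dfs_order (adj : V -> V -> bool) : seq V := map fst (dfs_trace adj).

Definition dfs_forest (adj : V -> V -> bool) : {set V * V} :=
  [set e : V * V | has (fun r : V * seq V => (r.1 == e.1) && (e.2 \in r.2)) (dfs_trace adj)].

Definition forestD (D : {set V * V}) := dfs_forest (dadj D).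
Definition forestU (G : {set V * V}) := dfs_forest (uadj G).

Definition fwd (D : {set V * V}) : {set V * V} :=
  let ord := dfs_order (dadj D) in
  [set e : V * V in upper |
     (((e.1, e.2) \in D) && (index e.1 ord < index e.2 ord)%N)
  || (((e.2, e.1) \in D) && (index e.2 ord < index e.1 ord)%N)].

Variable R : realFieldType.
Variable p : R.

Definition dlaw (D : {set V * V}) : R :=
  if D \subset offdiag then
    \prod_(e in offdiag) (if e \in D then p else 1 - p)
  else 0.

Definition ulaw (G : {set V * V}) : R :=
  if G \subset upper then
    \prod_(e in upper) (if e \in G then p else 1 - p)
  else 0.

Definition backs (G : {set V * V}) : {set V * V} :=
  let ord := dfs_order (uadj G) in [set e : V * V | (index e.2 ord < index e.1 ord)%N].

Definition orient (G : {set V * V}) : {set V * V} :=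
  let ord := dfs_order (uadj G) in
  [set e : V * V | uadj G e.1 e.2 && (index e.1 ord < index e.2 ord)%N].

Definition coupled (G B : {set V * V}) : {set V * V} := orient G :|: B.

Definition bweight (G B : {set V * V}) : R :=
  \prod_(e in backs G) (if e \in B then p else 1 - p).

End Graphs.

From HB Require Import structures.
From mathcomp Require Import all_boot all_order all_algebra.
Import Order.TTheory GRing.Theory Num.Theory.
Set Implicit Arguments. Unset Strict Implicit. Unset Printing Implicit Defensive.

(* Depth-first exploration only asks whether (v_i, y) is an edge when y is not
   yet explored, i.e. when y comes after v_i in the final ordering; so the run,
   hence the ordering and the forest, only see the forward edges.  Consequently
   D |-> (D_fwd, back edges of D) is a bijection from directed graphs onto pairs
   (G, B) with B a set of back edges for the ordering of G, with inverse
   (G, B) |-> (G oriented along its ordering) + B.  Forward and back pairs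
   partition the off-diagonal pairs, so this bijection maps the product law of
   vec G(n,p) to the law of G(n,p) times independent p-coins on the back pairs;
   (i) and (ii) follow because the forest and the forward graph of the coupled
   graph only depend on G. *)

Section DepthFirst.
Variable n : nat.
Implicit Types (adj : 'I_n -> 'I_n -> bool) (st : seq 'I_n * {set 'I_n}).

Lemma dfs_iter_forward adj1 adj2 k st :
  (forall x y, y \notin st.2 ->
     (index x (map fst (dfs_iter adj1 k st)) < index y (map fst (dfs_iter adj1 k st)))%N ->
     adj1 x y = adj2 x y) ->
  dfs_iter adj2 k st = dfs_iter adj1 k st.
Proof.
elim: k st => [|k IH] [[|v O] A] //= adj12.
set N1 := [seq y <- _ | adj1 v y && _ & _].
have -> : [seq y <- enum 'I_n | adj2 v y && (y \notin v :: O) & y \notin A] = N1.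
  apply: eq_filter => y; rewrite inE negb_or.
  have [/= vy|] := eqVneq v y; first by rewrite !andbF.
  rewrite eq_sym => yv; case yA: (y \in A); rewrite ?andbF // !andbT.
  congr (_ && _); apply/esym/adj12; first by rewrite yA.
  by rewrite /= eqxx eq_sym (negbTE yv).
congr (_ :: _); apply: IH => x y /=; rewrite in_setU1 negb_or => /andP[yv yA] lt_xy.
by apply: adj12 => //=; rewrite [v == y]eq_sym (negbTE yv) -/N1; case: (v == x).
Qed.

Lemma dfs_trace_forward adj1 adj2 :
  (forall x y, (index x (dfs_order adj1) < index y (dfs_order adj1))%N ->
     adj1 x y = adj2 x y) ->
  dfs_trace adj2 = dfs_trace adj1.
Proof. by move=> adj12; apply: dfs_iter_forward => x y _; apply: adj12. Qed.

Definition dfs_inv st :=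
  [/\ uniq st.1, [predI st.1 & st.2] =i pred0 & st.1 = [::] -> st.2 = setT].

Lemma dfs_step_inv adj st v N st' :
  dfs_inv st -> dfs_step adj st = (Some (v, N), st') ->
  [/\ dfs_inv st', st'.2 = v |: st.2 & v \notin st.2].
Proof.
case: st => [[|u O] A] [] //= /andP[uO uniqO] OA _.
rewrite /dfs_step /= => -[<- _ <-] /=.
have uA : u \notin A by move: (OA u); rewrite !inE eqxx /= => ->.
set Nu := [seq y <- _ | _ & _].
have Nu_new y : y \in Nu -> (y \notin u :: O) && (y \notin A).
  by rewrite mem_filter => /andP[/andP[/andP[_ ->] ->] _].
split=> //; split=> /=.
- case E: (Nu ++ O) => [|a l]; first exact/take_uniq/filter_uniq/enum_uniq.
  rewrite -E cat_uniq uniqO filter_uniq ?enum_uniq //= andbT.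
  by apply/hasPn => y yO; apply/negP => /Nu_new; rewrite inE yO orbT.
- move=> y; rewrite !inE; apply/negbTE; rewrite negb_and negb_or.
  case E: (Nu ++ O) => [|a l].
    rewrite -implyNb negbK; apply/implyP => /mem_take.
    by rewrite mem_filter !inE negb_or => /andP[].
  rewrite -E mem_cat; have [/Nu_new|yNu] /= := boolP (y \in Nu).
    by rewrite inE negb_or => /andP[/andP[-> _] ->].
  have [yO|] //= := boolP (y \in O).
  have := OA y; rewrite !inE yO orbT /= => ->; rewrite andbT.
  by apply: contraTneq yO => ->.
- case: (Nu ++ O) => // E; apply/setP => y; rewrite in_setT; apply/negPn/negP => yA.
  have : y \in [seq y <- enum 'I_n | y \notin u |: A] by rewrite mem_filter yA mem_enum.
  by case: [seq _ <- _ | _] E.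
Qed.

Lemma mem_dfs_iter adj k st x :
  dfs_inv st -> (#|~: st.2| <= k)%N -> x \notin st.2 ->
  x \in map fst (dfs_iter adj k st).
Proof.
elim: k st => [|k IH] st inv_st.
  by rewrite leqn0 cards_eq0 => /eqP/setP/(_ x); rewrite !inE => ->.
case E: (dfs_step adj st) => [[[v N]|] st'] /=; rewrite E; last first.
  by move: E; case: st inv_st => [[|v O] A] [_ _ /= full] //= _ _; rewrite full ?inE.
have [inv_st' st'2 v_new] := dfs_step_inv inv_st E.
move=> le_k x_new; rewrite inE; have [//|xv] /= := eqVneq x v.
apply: IH; rewrite // ?st'2 ?in_setU1 ?negb_or ?xv //.
move: le_k; rewrite setCU (cardsD1 v) in_setC v_new add1n ltnS.
by apply/leq_trans/subset_leq_card/subsetP => y; rewrite !inE.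
Qed.

Lemma mem_dfs_order adj x : x \in dfs_order adj.
Proof.
apply: mem_dfs_iter; rewrite ?inE ?setC0 ?cardsT ?card_ord //.
split=> [|y|] /=; rewrite ?inE ?andbF ?take_uniq ?enum_uniq //.
by case: (enum 'I_n) (mem_enum 'I_n x).
Qed.

End DepthFirst.

Section Coupling.
Variable n : nat.
Implicit Types (D G B : {set 'I_n * 'I_n}) (adj : 'I_n -> 'I_n -> bool).

Lemma index_dfs_order_inj adj : injective (index ^~ (dfs_order adj)).
Proof. by move=> x y; apply: (@index_inj _ x); apply: mem_dfs_order. Qed.

Lemma dfs_trace_coupled G B :
  B \subset backs G -> dfs_trace (dadj (coupled G B)) = dfs_trace (uadj G).
Proof.
move=> /subsetP sBb; apply: dfs_trace_forward => x y lt_xy.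
rewrite /dadj /coupled /orient !inE /= lt_xy andbT.
case: (boolP ((x, y) \in B)) => [/sBb|]; rewrite ?orbT ?orbF // inE /=.
by move/(ltn_trans lt_xy); rewrite ltnn.
Qed.

Lemma dfs_order_coupled G B :
  B \subset backs G -> dfs_order (dadj (coupled G B)) = dfs_order (uadj G).
Proof. by move=> sBb; rewrite /dfs_order dfs_trace_coupled. Qed.

Lemma uadj_fwd D x y :
  (index x (dfs_order (dadj D)) < index y (dfs_order (dadj D)))%N ->
  uadj (fwd D) x y = dadj D x y.
Proof.
move=> lt_xy; have := ltnW lt_xy; rewrite leqNgt => /negbTE gt_xy.
rewrite /uadj /fwd !inE /= lt_xy gt_xy !andbT !andbF !orbF.
case: ltngtP => [//|//|/val_inj eq_xy]; rewrite ?orbF //.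
by move: lt_xy; rewrite eq_xy ltnn.
Qed.

Lemma dfs_trace_fwd D : dfs_trace (uadj (fwd D)) = dfs_trace (dadj D).
Proof. by apply: dfs_trace_forward => x y /uadj_fwd ->. Qed.

Lemma dfs_order_fwd D : dfs_order (uadj (fwd D)) = dfs_order (dadj D).
Proof. by rewrite /dfs_order dfs_trace_fwd. Qed.

Lemma forestD_coupled G B : B \subset backs G -> forestD (coupled G B) = forestU G.
Proof. by move=> sBb; rewrite /forestD /forestU /dfs_forest dfs_trace_coupled. Qed.

Lemma fwd_coupled G B :
  G \subset upper n -> B \subset backs G -> fwd (coupled G B) = G.
Proof.
move=> /subsetP sGu /subsetP sBb; apply/setP => -[x y].
rewrite /fwd dfs_order_coupled /coupled /orient; last exact/subsetP.
set o := dfs_order (uadj G).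
have ltG a b : (a, b) \in G -> (a < b)%N by move/sGu; rewrite inE.
have ltB a b : (a, b) \in B -> (index b o < index a o)%N by move/sBb; rewrite inE.
rewrite !inE /=; have [lt_xy|le_yx] /= := ltnP x y; last first.
  by apply/esym/negP => /ltG; rewrite ltnNge le_yx.
have Gyx : ((y, x) \in G) = false by apply/negP => /ltG; rewrite ltnNge ltnW.
rewrite /uadj Gyx orbF.
case: (ltngtP (index x o) (index y o)) => [lt_o|lt_o|/index_dfs_order_inj eq_xy].
- have -> : ((x, y) \in B) = false by apply/negP => /ltB; rewrite ltnNge (ltnW lt_o).
  by rewrite !andbT !andbF !orbF.
- have -> : ((y, x) \in B) = false by apply/negP => /ltB; rewrite ltnNge (ltnW lt_o).
  by rewrite !andbT !andbF /= orbF.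
- by move: lt_xy; rewrite eq_xy ltnn.
Qed.

Lemma coupled_fwd D :
  D \subset offdiag n -> coupled (fwd D) (D :&: backs (fwd D)) = D.
Proof.
move=> /subsetP sDo; apply/setP => -[x y].
rewrite /coupled /orient /backs !inE /= dfs_order_fwd.
case: ltngtP => [/uadj_fwd ->|_|/index_dfs_order_inj eq_yx].
- by rewrite andbT andbF orbF.
- by rewrite andbF andbT.
- rewrite !andbF; apply/esym/negP => /sDo.
  by rewrite inE eq_yx eqxx.
Qed.

Lemma coupled_offdiag G B : B \subset backs G -> coupled G B \subset offdiag n.
Proof.
move=> /subsetP sBb; apply/subsetP => -[x y]; rewrite /coupled /orient !inE /=.
by case/orP => [/andP[_]|/sBb]; rewrite ?inE /=; apply: contraTneq => ->; rewrite ltnn.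
Qed.

Lemma coupledI_backs G B : B \subset backs G -> coupled G B :&: backs G = B.
Proof.
move=> /subsetP sBb; apply/setP => -[x y]; rewrite /coupled /orient !inE /=.
case xyB: (_ \in B); last first.
  by rewrite orbF; apply/negP => /andP[/andP[_ /ltn_trans lt] /lt]; rewrite ltnn.
by rewrite orbT; move: (sBb _ xyB); rewrite inE.
Qed.

End Coupling.

Local Open Scope ring_scope.

Lemma sum_subset_bernoulli (R : comPzRingType) (T : finType) (S : {set T}) (p : R) :
  \sum_(B : {set T} | B \subset S) \prod_(e in S) (if e \in B then p else 1 - p) = 1.
Proof.
pose F e := if e \in S then p else 0; pose G e := if e \in S then 1 - p else 1.
transitivity (\prod_e (F e + G e)); last first.
  by rewrite big1 // => e _; rewrite /F /G; case: ifP; rewrite ?subrKC ?add0r.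
rewrite bigA_distr big_mkcond; apply: eq_big => // B _.
have [sBS|/subsetPn[e eB eS]] := boolP (B \subset S).
  rewrite [LHS]big_mkcond /=; apply: eq_bigr => e _; rewrite /F /G.
  by case: (boolP (e \in S)) => // eS; rewrite (negbTE (contraNN (subsetP sBS e) eS)).
by rewrite (bigD1 e) //= /F eB (negbTE eS) mul0r.
Qed.

Lemma prod_offdiag_upper (R : comPzSemiRingType) n (F : 'I_n * 'I_n -> R) :
  \prod_(e in offdiag n) F e = \prod_(e in upper n) (F e * F (e.2, e.1)).
Proof.
have swapK : involutive (fun e : 'I_n * 'I_n => (e.2, e.1)) by case.
rewrite big_split /= (bigID (fun e : 'I_n * 'I_n => e.1 < e.2)%N) /=.
congr (_ * _); last rewrite (reindex_inj (inv_inj swapK)) /=.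
all: apply: eq_bigl => -[x y]; rewrite !inE /=.
all: case: ltngtP => [lt_xy|lt_yx|/val_inj ->]; rewrite ?eqxx ?andbF ?andbT //.
all: by rewrite -val_eqE neq_ltn; apply/orP; auto.
Qed.

Section Laws.
Variables (R : realFieldType) (n : nat) (p : R).
Implicit Types (D G B : {set 'I_n * 'I_n}) (Q P : pred {set 'I_n * 'I_n}).

Lemma backs_offdiag G : backs G \subset offdiag n.
Proof.
by apply/subsetP => -[x y]; rewrite !inE /=; apply: contraTneq => ->; rewrite ltnn.
Qed.

Lemma fwd_upper D : fwd D \subset upper n.
Proof. by apply/subsetP => e; rewrite inE => /andP[]. Qed.

Lemma ulaw_bweight_fwd D :
  D \subset offdiag n ->
  ulaw p (fwd D) * bweight p (fwd D) (D :&: backs (fwd D)) = dlaw p D.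
Proof.
move=> sDo; rewrite /ulaw /dlaw fwd_upper sDo.
have -> : bweight p (fwd D) (D :&: backs (fwd D)) = \prod_(e in offdiag n)
    (if e \in backs (fwd D) then (if e \in D then p else 1 - p) else 1).
  rewrite /bweight [RHS](big_setID (backs (fwd D))) (setIidPr (backs_offdiag _)) /=.
  rewrite [X in _ * X]big1 ?mulr1 => [|e]; last by rewrite inE => /andP[/negbTE ->].
  by apply: eq_bigr => e eb; rewrite eb inE eb andbT.
rewrite !prod_offdiag_upper -big_split /=; apply: eq_bigr => -[x y]; rewrite inE /= => lt_xy.
rewrite /backs dfs_order_fwd /fwd !inE /= lt_xy.
set o := dfs_order (dadj D).
case: (ltngtP (index x o) (index y o)) => [lt_o|lt_o|/index_dfs_order_inj eq_xy].
- by rewrite !andbT !andbF !orbF mul1r.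
- by rewrite !andbT !andbF /= mulr1 mulrC.
- by move: lt_xy; rewrite eq_xy ltnn.
Qed.

Lemma sum_bweight G : \sum_(B : {set 'I_n * 'I_n} | B \subset backs G) bweight p G B = 1.
Proof. exact: sum_subset_bernoulli. Qed.

Lemma sum_ulaw_bweight_coupled D0 :
  \sum_(G : {set 'I_n * 'I_n})
    \sum_(B : {set 'I_n * 'I_n} | (B \subset backs G) && (coupled G B == D0))
      ulaw p G * bweight p G B = dlaw p D0.
Proof.
have [sDo|nsDo] := boolP (D0 \subset offdiag n); last first.
  rewrite /dlaw (negbTE nsDo) big1 // => G _; rewrite big1 // => B /andP[sBb /eqP eqD].
  by rewrite -eqD coupled_offdiag in nsDo.
rewrite (bigD1 (fwd D0)) //= [X in _ + X]big1 ?addr0 => [|G /eqP nG]; last first.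
  rewrite big1 // => B /andP[sBb /eqP eqD].
  have [sGu|nsGu] := boolP (G \subset upper n); last by rewrite /ulaw (negbTE nsGu) mul0r.
  by case: nG; rewrite -eqD fwd_coupled.
rewrite (bigD1 (D0 :&: backs (fwd D0))) /=; last by rewrite subsetIr coupled_fwd ?eqxx.
rewrite big1 ?addr0 ?ulaw_bweight_fwd // => B /andP[/andP[sBb /eqP eqD] /eqP[]].
by rewrite -[in RHS]eqD (fwd_coupled (fwd_upper _) sBb) coupledI_backs.
Qed.

Lemma sum_dlaw_transfer Q P :
  (forall G B, G \subset upper n -> B \subset backs G -> Q (coupled G B) = P G) ->
  \sum_(D : {set 'I_n * 'I_n} | Q D) dlaw p D
  = \sum_(G : {set 'I_n * 'I_n} | P G) ulaw p G.
Proof.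
move=> QP; under eq_bigr do rewrite -sum_ulaw_bweight_coupled.
rewrite exchange_big [RHS]big_mkcond /=; apply: eq_bigr => G _.
transitivity (\sum_(D : {set 'I_n * 'I_n} | Q D)
   \sum_(B : {set 'I_n * 'I_n} | (B \subset backs G) && Q (coupled G B) && (coupled G B == D))
     ulaw p G * bweight p G B).
  apply: eq_bigr => D QD; apply: eq_bigl => B.
  by case: eqP => [->|]; rewrite ?QD ?andbT ?andbF.
rewrite -partition_big /=; last by move=> B /andP[].
have [sGu|nsGu] := boolP (G \subset upper n); last first.
  by rewrite /ulaw (negbTE nsGu) big1 ?if_same // => B _; rewrite mul0r.
rewrite (eq_bigl (fun B => P G && (B \subset backs G))) => [|B]; last first.
  by case: (boolP (B \subset _)) => sBb; rewrite ?andbF ?andbT //= QP.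
by case: (P G) => /=; rewrite ?big_pred0_eq // -big_distrr /= sum_bweight mulr1.
Qed.

End Laws.

Theorem proposition2p1 (R : realFieldType) (n : nat) (p : R) :
  0 <= p -> p <= 1 ->
  (* (i) forests have the same law *)
  (forall F : {set 'I_n * 'I_n},
     \sum_(D : {set 'I_n * 'I_n} | forestD D == F) dlaw p D
   = \sum_(G : {set 'I_n * 'I_n} | forestU G == F) ulaw p G)
  /\
  (* (ii) the forward graph of vec G(n,p) has the law of G(n,p) *)
  (forall H : {set 'I_n * 'I_n},
     \sum_(D : {set 'I_n * 'I_n} | fwd D == H) dlaw p D = ulaw p H)
  /\
  (* (iii) the coupling *)
  ((forall G B : {set 'I_n * 'I_n},
      G \subset upper n -> B \subset backs G -> fwd (coupled G B) = G)
   /\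
   (forall D0 : {set 'I_n * 'I_n},
      \sum_(G : {set 'I_n * 'I_n})
        \sum_(B : {set 'I_n * 'I_n} | (B \subset backs G) && (coupled G B == D0))
          ulaw p G * bweight p G B
      = dlaw p D0)
   /\
   (forall G0 : {set 'I_n * 'I_n},
      \sum_(B : {set 'I_n * 'I_n} | B \subset backs G0) ulaw p G0 * bweight p G0 B
      = ulaw p G0)).
Proof.
(* All parts are polynomial identities in p. *)
move=> _ _; split; [|split; [|split; [|split]]].
- move=> F; apply: sum_dlaw_transfer => G B _ sBb.
  by rewrite forestD_coupled.
- move=> H; rewrite (@sum_dlaw_transfer _ _ p _ (pred1 H)) ?big_pred1_eq // => G B sGu sBb.
  by rewrite fwd_coupled.
- exact: fwd_coupled.
- exact: sum_ulaw_bweight_coupled.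
- by move=> G0; rewrite -big_distrr /= sum_bweight mulr1.
Qed.
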